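(* Let $L\subset\mathbf{Q}$ be a nonzero subgroup, $\mathbb{A}_f$ the finite adeles of $\mathbf{Q}$ and $\widehat{\mathbf{Z}}\subset\mathbb{A}_f$ the profinite integers, and let $\xi\in\operatorname{Hom}(L,\widehat{\mathbf{Z}})$. (i) There exists a unique $a_f\in\mathbb{A}_f$ such that $\xi(x)=a_fx$ for all $x\in L$. (ii) With $a_f$ as in (i), the following are equivalent: (1) $\xi$ generates the $\widehat{\mathbf{Z}}$-module $\operatorname{Hom}(L,\widehat{\mathbf{Z}})$; (2) $L=\{q\in\mathbf{Q}\mid a_fq\in\widehat{\mathbf{Z}}\}$. *)

(* Zhat  = lim_n Z/nZ  (the standard definition), an element being the family
           of canonical residues z_n in [0, n) for n = 1, 2, ...
           (component index k stands for the modulus k.+1).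
   Af    = finite adeles of Q, modelled as lim_n Q/nZ.  This is the standard
           isomorphism A_f = Q + Zhat, A_f / n Zhat = Q / nZ, A_f complete for
           the n Zhat-adic topology; an element is the family of canonical
           representatives a_n in [0, n) of its images in Q/nZ. *)
From HB Require Import structures.
From mathcomp Require Import all_boot all_order all_algebra.
Set Implicit Arguments. Unset Strict Implicit. Unset Printing Implicit Defensive.
Import Order.TTheory GRing.Theory Num.Theory.
Local Open Scope ring_scope.

Definition rmod (q : rat) (n : nat) : rat :=
  q - n%:R * (Num.floor (q / n%:R))%:~R.

Record Zhat := MkZhat {
  zval : nat -> int;
  zval_compat : forall k l : nat, (k.+1 %| l.+1)%N ->
      zval k = (zval l %% (k.+1)%:Z)%Z }.

Definition zadd (a b : Zhat) : nat -> int := fun k => ((zval a k + zval b k) %% (k.+1)%:Z)%Z.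
Definition zmul (a b : Zhat) : nat -> int := fun k => ((zval a k * zval b k) %% (k.+1)%:Z)%Z.

Record Af := MkAf {
  aval : nat -> rat;
  aval_compat : forall k l : nat, (k.+1 %| l.+1)%N -> aval k = rmod (aval l) k.+1 }.

Definition zhat_to_af (z : Zhat) : nat -> rat := fun k => (zval z k)%:~R.

Definition afmulq (a : Af) (x : rat) : nat -> rat :=
  fun k => rmod (x * aval a ((k.+1 * `|denq x|%N).-1)) k.+1.

Definition in_Zhat (c : nat -> rat) : Prop := exists z : Zhat, c = zhat_to_af z.

Definition is_subgroup (L : rat -> Prop) : Prop :=
  L 0 /\ forall x y, L x -> L y -> L (x - y).

(* xi : L -> Zhat is a group homomorphism (values off L irrelevant) *)
Definition is_hom (L : rat -> Prop) (xi : rat -> Zhat) : Prop :=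
  forall x y, L x -> L y -> zval (xi (x + y)) = zadd (xi x) (xi y).

Definition generates_Hom (L : rat -> Prop) (xi : rat -> Zhat) : Prop :=
  forall eta : rat -> Zhat, is_hom L eta ->
    exists c : Zhat, forall x, L x -> zval (eta x) = zmul c (xi x).

(* Everything is computed through the classes of a q in A_f / Zhat = Q / Z.
   (i) For x0 > 0 in L the adele a = xi(x0) / x0 satisfies a x = xi(x) on L,
   since xi respects every integer relation k x = k' x0. Every rational is an
   integer multiple of some x0 / n, so the classes of a x0 / n, which are read
   off a x0, determine a.
   (ii) By (i) every eta in Hom(L, Zhat) is multiplication by an adele b.
   If xi generates and a q lies in Zhat, pick k > 0 with k q in L and remove
   the prime factors p of k one at a time: if p y lies in L but y does not,
   then x |-> e_p x / (p y), with e_p the p-adic idempotent of Zhat, maps L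
   into Zhat and is 1 mod p at p y, where every multiple of xi vanishes mod p.
   Conversely, if L = {q | a q in Zhat}, then q |-> a q mod Zhat embeds
   M^-1 L / L into (1/M) Z / Z, so this group is cyclic and b = s a on M^-1 L
   for an integer s unique modulo its order; the Chinese remainder theorem
   lifts these s compatibly along the factorials to c in Zhat with eta = c xi. *)

From HB Require Import structures.
From mathcomp Require Import all_boot all_order all_algebra.
From mathcomp Require Import zify ring lra.
From Stdlib Require Import FunctionalExtensionality.
From Stdlib Require Import Classical IndefiniteDescription.
Import Order.TTheory GRing.Theory Num.Theory.
Local Open Scope ring_scope.
Set Implicit Arguments. Unset Strict Implicit.

(** * Congruences in Q *)

Definition eqmodq (m q r : rat) : Prop := exists k : int, q - r = k%:~R * m.

Notation "q = r %[modq m ]" := (eqmodq m q r)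
  (at level 70, r at next level,
   format "'[hv ' q '/'  =  r '/'  %[modq  m ] ']'") : ring_scope.

Section CongruenceModQ.
Implicit Types (m q r s : rat) (k : int).

Lemma eqmodq_refl m q : q = q %[modq m].
Proof. by exists 0; rewrite subrr mul0r. Qed.

Lemma eqmodq_sym m q r : q = r %[modq m] -> r = q %[modq m].
Proof. by case=> k E; exists (- k); rewrite intrN mulNr -E opprB. Qed.

Lemma eqmodq_trans m q r s : q = r %[modq m] -> r = s %[modq m] -> q = s %[modq m].
Proof. by case=> k E [l F]; exists (k + l); rewrite intrD mulrDl -E -F; ring. Qed.

Lemma eqmodqD m q1 r1 q2 r2 :
  q1 = r1 %[modq m] -> q2 = r2 %[modq m] -> q1 + q2 = r1 + r2 %[modq m].
Proof. by case=> k E [l F]; exists (k + l); rewrite intrD mulrDl -E -F; ring. Qed.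

Lemma eqmodqN m q r : q = r %[modq m] -> - q = - r %[modq m].
Proof. by case=> k E; exists (- k); rewrite intrN mulNr -E; ring. Qed.

Lemma eqmodqB m q1 r1 q2 r2 :
  q1 = r1 %[modq m] -> q2 = r2 %[modq m] -> q1 - q2 = r1 - r2 %[modq m].
Proof. by move=> E F; apply: eqmodqD E (eqmodqN F). Qed.

Lemma eqmodqMz m q r k : q = r %[modq m] -> k%:~R * q = k%:~R * r %[modq m].
Proof. by case=> l E; exists (k * l); rewrite intrM -mulrA -E; ring. Qed.

Lemma eqmodq_scale c m q r : q = r %[modq m] -> c * q = c * r %[modq c * m].
Proof. by case=> k E; exists k; rewrite -mulrBr E; ring. Qed.

Lemma eqmodq_mulmod m q r k : q = r %[modq k%:~R * m] -> q = r %[modq m].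
Proof. by case=> l E; exists (l * k); rewrite E intrM mulrA. Qed.

Lemma eqmodq_dvdn (d n : nat) q r :
  (d %| n)%N -> q = r %[modq n%:R] -> q = r %[modq d%:R].
Proof.
move=> /divnK nE E; apply: (@eqmodq_mulmod _ _ _ (n %/ d)%N).
by rewrite -[_%:~R]/((n %/ d)%:R) -natrM nE.
Qed.

Lemma eqmodq1E q r : (q = r %[modq 1]) <-> q - r \is a Num.int.
Proof.
split=> [[k ->]|/intrP[k E]]; first by rewrite mulr1 intr_int.
by exists k; rewrite mulr1.
Qed.

Lemma eqmodq_int_mod m q r : q = r %[modq m] -> m \is a Num.int -> q = r %[modq 1].
Proof. by move=> E /intrP[k mE]; apply: (@eqmodq_mulmod _ _ _ k); rewrite mulr1 -mE. Qed.

Lemma eqmodq1_int q r : q = r %[modq 1] -> r \is a Num.int -> q \is a Num.int.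
Proof. by move=> /eqmodq1E qr rZ; rewrite -(subrK r q) rpredD. Qed.

Lemma eqmodq_range_eq (n q r : rat) :
  0 <= q < n -> 0 <= r < n -> q = r %[modq n] -> q = r.
Proof.
move=> /andP[q0 qn] /andP[r0 rn] [k E].
have n0 : 0 < n by lra.
have k0 : k = 0.
  have : -1 < k%:~R :> rat by rewrite -(ltr_pM2r n0) mulN1r -E; lra.
  have : k%:~R < 1 :> rat by rewrite -(ltr_pM2r n0) mul1r -E; lra.
  rewrite -[-1 : rat]/((-1 : int)%:~R) -[1 : rat]/((1 : int)%:~R) !ltr_int; lia.
by apply/eqP; rewrite -subr_eq0 E k0 mul0r.
Qed.

Lemma eqmodq_scale_int c m q r :
  c * m \is a Num.int -> q = r %[modq m] -> c * q = c * r %[modq 1].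
Proof. by move=> cmZ qr; apply: eqmodq_int_mod (eqmodq_scale c qr) cmZ. Qed.

Lemma eqmodq_scaleE c m q r :
  c != 0 -> (c * q = c * r %[modq c * m]) <-> (q = r %[modq m]).
Proof.
move=> c0; split=> [|/(eqmodq_scale c)] //.
by move=> /(eqmodq_scale c^-1); rewrite !mulKf.
Qed.

Lemma eqmodq_intE (x y : int) (n : nat) :
  (x%:~R = y%:~R %[modq n%:R]) <-> (n%:Z %| x - y)%Z.
Proof.
split=> [[k E]|/dvdzP[k E]]; last by exists k; rewrite -intrB E intrM.
by apply/dvdzP; exists k; apply: (@intr_inj rat); rewrite intrB E intrM.
Qed.

Lemma eqmodq_modn (x y m : nat) : (x = y %[mod m])%N -> x%:R = y%:R %[modq m%:R].
Proof.
move=> xy; exists (Posz (x %/ m) - Posz (y %/ m)).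
by rewrite {1}(divn_eq x m) {1}(divn_eq y m) xy !natrD !natrM intrB /=; ring.
Qed.

End CongruenceModQ.

Lemma chinese_gcd (D N : nat) (j s : int) : ((gcdn D N)%:Z %| j - s)%Z ->
  exists s' : int, (D%:Z %| s' - j)%Z /\ (N%:Z %| s' - s)%Z.
Proof.
move=> /dvdzP[w jsE]; have [u [v uv]] := Bezoutz D N.
have jE : j = s + w * (u * D%:Z + v * N%:Z) by rewrite uv -jsE; ring.
exists (s + w * v * N%:Z); split; apply/dvdzP.
- by exists (- (w * u)); rewrite jE; ring.
- by exists (w * v); ring.
Qed.

Lemma ex_minimal_nat (P : nat -> Prop) :
  (exists n, P n) -> exists n, P n /\ forall m, (m < n)%N -> ~ P m.
Proof.
move=> [n Pn]; elim/ltn_ind: n Pn => n IHn Pn.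
case: (classic (exists2 m, (m < n)%N & P m)) => [[m mn Pm]|noP]; first exact: IHn Pm.
by exists n; split=> // m mn Pm; apply: noP; exists m.
Qed.

Lemma int_subgroup_generator (T : int -> Prop) (M : nat) :
  (0 < M)%N -> T M -> (forall t1 t2 (i : int), T t1 -> T t2 -> T (t1 - i * t2)) ->
  exists g : nat, [/\ (0 < g)%N, T g & forall t, T t -> (g%:Z %| t)%Z].
Proof.
move=> M0 TM Tsub.
have [g [[g0 Tg] gmin]] :=
  ex_minimal_nat (ex_intro (fun g => (0 < g)%N /\ T g) M (conj M0 TM)).
exists g; split=> // t Tt; apply/dvdz_mod0P.
have gnz : g%:Z != 0 by rewrite eqz_nat -lt0n.
have r_ge0 := modz_ge0 t gnz; have r_lt := ltz_mod t gnz.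
have Tr : T (t %% g)%Z by apply: Tsub.
have [/eqP //|r_nz] := boolP ((t %% g)%Z == 0).
have r_lt' : (`|(t %% g)%Z| < g)%N by lia.
case: (gmin _ r_lt'); split; first by lia.
by have -> : Posz `|(t %% g)%Z| = (t %% g)%Z by lia.
Qed.

Lemma dvdn_fact_fact m n : (m <= n)%N -> (m`! %| n`!)%N.
Proof. by move=> mn; rewrite -(bin_fact mn) dvdn_mull // dvdn_mulr. Qed.

(** * Components of profinite integers and finite adeles *)

Section Representatives.
Implicit Types (q r : rat) (n : nat).

Lemma rmod_eqmodq q n : rmod q n = q %[modq n%:R].
Proof. by exists (- Num.floor (q / n%:R)); rewrite /rmod intrN; ring. Qed.

Lemma rmod_range q n : (0 < n)%N -> 0 <= rmod q n < n%:R.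
Proof.
move=> n0; have n0' : 0 < (n%:R : rat) by rewrite ltr0n.
have lb := floor_le (q / n%:R); have ub := floorD1_gt (q / n%:R).
rewrite intrD in ub; set f := (Num.floor _)%:~R in lb ub *.
have qE : q = q / n%:R * n%:R by rewrite divfK // gt_eqF.
rewrite /rmod -/f; apply/andP; split.
- by rewrite subr_ge0 [X in _ <= X]qE mulrC ler_pM2r.
- rewrite ltrBlDr [X in X < _]qE.
  have -> : n%:R + n%:R * f = (f + 1) * n%:R by ring.
  by rewrite ltr_pM2r.
Qed.

Lemma rmod_uniq q r n : (0 < n)%N -> 0 <= r < n%:R -> q = r %[modq n%:R] -> rmod q n = r.
Proof.
move=> n0 r_range qr; apply: eqmodq_range_eq (rmod_range q n0) r_range _.
exact: eqmodq_trans (rmod_eqmodq q n) qr.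
Qed.

Lemma eqmodq_rmod q r n : (0 < n)%N -> q = r %[modq n%:R] -> rmod q n = rmod r n.
Proof.
move=> n0 qr; apply: rmod_uniq n0 (rmod_range r n0) _.
exact: eqmodq_trans qr (eqmodq_sym (rmod_eqmodq r n)).
Qed.

Lemma modz_eqmodq (m : int) n : ((m %% n)%Z)%:~R = m%:~R %[modq n%:R].
Proof.
exists (- (m %/ n)%Z); rewrite -[n%:R]/((n%:Z)%:~R : rat) -intrM -intrB.
by rewrite {2}(divz_eq m n) opprD addrCA subrr addr0 mulNr.
Qed.

Lemma modz_range (m : int) n : (0 < n)%N -> (0 : rat) <= ((m %% n)%Z)%:~R < (n%:R : rat).
Proof.
move=> n0; have nz : n%:Z != 0 by rewrite eqz_nat -lt0n.
have := modz_ge0 m nz; have := ltz_mod m nz => ub lb.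
by rewrite -[n%:R]/((n%:Z)%:~R : rat) ler0z ltr_int lb.
Qed.

Lemma modz_uniq (m r : int) n : (0 < n)%N -> (0 : rat) <= r%:~R < (n%:R : rat) ->
  m%:~R = r%:~R %[modq n%:R] -> (m %% n)%Z = r.
Proof.
move=> n0 r_range mr; apply: (@intr_inj rat).
apply: eqmodq_range_eq (modz_range m n0) r_range _.
exact: eqmodq_trans (modz_eqmodq m n) mr.
Qed.

Lemma rmod_int (m : int) n : (0 < n)%N -> rmod m%:~R n = ((m %% n)%Z)%:~R.
Proof.
move=> n0; apply: rmod_uniq n0 (modz_range m n0) _.
exact: eqmodq_sym (modz_eqmodq m n).
Qed.

End Representatives.

Definition nden (q : rat) : nat := `|denq q|%N.

Lemma nden_gt0 q : (0 < nden q)%N.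
Proof. by rewrite /nden absz_gt0 denq_neq0. Qed.

Lemma mulq_nden q : q * (nden q)%:R = (numq q)%:~R.
Proof. by rewrite /nden natr_absz gtr0_norm ?denq_gt0 // numqE. Qed.

Lemma mulq_nden_int q : q * (nden q)%:R \is a Num.int.
Proof. by rewrite mulq_nden intr_int. Qed.

(* Components indexed by the modulus n > 0, not by n.-1 as in aval and zval. *)
Definition acomp (a : Af) (n : nat) : rat := aval a n.-1.
Definition zcomp (z : Zhat) (n : nat) : int := zval z n.-1.

Definition modq_compatible (f : nat -> rat) : Prop :=
  forall m n, (0 < n)%N -> (m %| n)%N -> f n = f m %[modq m%:R].

Lemma acomp_range a n : (0 < n)%N -> 0 <= acomp a n < n%:R.
Proof. by case: n => // k _; rewrite /acomp /= (aval_compat a (dvdnn k.+1)) rmod_range. Qed.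

Lemma acomp_compatible a : modq_compatible (acomp a).
Proof.
move=> [|k] [|l] //= _ kl.
by rewrite /acomp /= (aval_compat a kl); apply/eqmodq_sym/rmod_eqmodq.
Qed.

Lemma zcomp_range z n : (0 < n)%N -> (0 : rat) <= (zcomp z n)%:~R < (n%:R : rat).
Proof. by case: n => // k _; rewrite /zcomp /= (zval_compat z (dvdnn k.+1)) modz_range. Qed.

Lemma zcomp_compatible z : modq_compatible (fun n => (zcomp z n)%:~R).
Proof.
move=> [|k] [|l] //= _ kl.
by rewrite /zcomp /= (zval_compat z kl); apply/eqmodq_sym/modz_eqmodq.
Qed.

Lemma Af_ext a b : (forall n, (0 < n)%N -> acomp a n = acomp b n) -> a = b.
Proof.
case: a b => [fa Ha] [fb Hb] /= E.
have fE : fa = fb by apply: functional_extensionality => k; exact: (E k.+1).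
by subst fb; f_equal; apply: proof_irrelevance.
Qed.

Section Build.

Variable f : nat -> rat.
Hypothesis f_compat : modq_compatible f.

Fact mkAf_subproof k l : (k.+1 %| l.+1)%N ->
  (fun i => rmod (f i.+1) i.+1) k = rmod ((fun i => rmod (f i.+1) i.+1) l) k.+1.
Proof.
move=> kl /=; apply: eqmodq_rmod => //.
apply: eqmodq_trans (eqmodq_sym (f_compat (ltn0Sn l) kl)) _.
by apply: eqmodq_dvdn kl _; apply: eqmodq_sym; apply: rmod_eqmodq.
Qed.

Definition mkAf : Af := MkAf mkAf_subproof.

Lemma acomp_mkAf n : (0 < n)%N -> acomp mkAf n = f n %[modq n%:R].
Proof. by case: n => // k _; apply: rmod_eqmodq. Qed.

End Build.

Section BuildZhat.

Variable g : nat -> int.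
Hypothesis g_compat : modq_compatible (fun n => (g n)%:~R).

Fact mkZhat_subproof k l : (k.+1 %| l.+1)%N ->
  (fun i => (g i.+1 %% i.+1)%Z) k = ((fun i => (g i.+1 %% i.+1)%Z) l %% k.+1)%Z.
Proof.
move=> kl /=; apply: esym; apply: modz_uniq => //; first exact: modz_range.
apply: eqmodq_trans (eqmodq_dvdn kl (modz_eqmodq _ _)) _.
exact: eqmodq_trans (g_compat (ltn0Sn l) kl) (eqmodq_sym (modz_eqmodq _ _)).
Qed.

Definition mkZhat : Zhat := MkZhat mkZhat_subproof.

Lemma zcomp_mkZhat n : (0 < n)%N -> (zcomp mkZhat n)%:~R = (g n)%:~R %[modq n%:R].
Proof. by case: n => // k _; apply: modz_eqmodq. Qed.

End BuildZhat.

(* The factorials are cofinal for divisibility. *)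
Lemma zhat_of_factorial_chain (P : nat -> int -> Prop) (s0 : int) : P 0%N s0 ->
  (forall j s, P j s -> exists s', P j.+1 s' /\ s'%:~R = s%:~R %[modq (j`!)%:R]) ->
  exists c : Zhat, forall n, (0 < n)%N ->
    exists s, P n s /\ (zcomp c n)%:~R = s%:~R %[modq n%:R].
Proof.
move=> P0 Plift.
have [f fP] : exists f : nat -> int -> int, forall j s, P j s ->
    P j.+1 (f j s) /\ (f j s)%:~R = s%:~R %[modq (j`!)%:R].
  have step j s : exists s', P j s -> P j.+1 s' /\ s'%:~R = s%:~R %[modq (j`!)%:R].
    case: (classic (P j s)) => [/Plift[s' hs']|nPjs]; first by exists s'.
    by exists s => /nPjs.
  exists (fun j s => proj1_sig (constructive_indefinite_description _ (step j s))).
  by move=> j s; apply: (proj2_sig (constructive_indefinite_description _ (step j s))).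
pose t j := iteri j f s0.
have tP j : P j (t j) by elim: j => //= j IHj; case: (fP j _ IHj).
have t_mod m j : (m <= j)%N -> (t j)%:~R = (t m)%:~R %[modq (m`!)%:R].
  elim: j => [|j IHj]; first by rewrite leqn0 => /eqP ->; apply: eqmodq_refl.
  rewrite leq_eqVlt => /predU1P[-> | ]; first exact: eqmodq_refl.
  rewrite ltnS => mj; apply: eqmodq_trans (IHj mj).
  exact: eqmodq_dvdn (dvdn_fact_fact mj) (fP j _ (tP j)).2.
have t_compat : modq_compatible (fun n => (t n)%:~R).
  move=> m n n0 mn; have m0 := dvdn_gt0 n0 mn.
  by apply: eqmodq_dvdn (t_mod m n (dvdn_leq n0 mn)); rewrite dvdn_fact ?m0 ?leqnn.
exists (mkZhat t_compat) => n n0; exists (t n); split; [exact: tP | exact: zcomp_mkZhat].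
Qed.

(** * The character q |-> a q mod Zhat *)

(* [achar a q] represents the class of [a * q] in A_f / Zhat = Q / Z. *)
Definition achar (a : Af) (q : rat) : rat := q * acomp a (nden q).

Section AdeleCharacter.
Variable a : Af.
Implicit Types (q r x : rat).

Lemma achar_eqmodq q (N : nat) : (0 < N)%N -> q * N%:R \is a Num.int ->
  q * acomp a N = achar a q %[modq 1].
Proof.
move=> N0 qNZ; set M := (N * nden q)%N.
have M0 : (0 < M)%N by rewrite muln_gt0 N0 nden_gt0.
have aMN := acomp_compatible a M0 (dvdn_mulr (nden q) (dvdnn N)).
have aMd := acomp_compatible a M0 (dvdn_mull N (dvdnn (nden q))).
apply: eqmodq_trans (eqmodq_sym (eqmodq_scale_int qNZ aMN)) _.
exact: eqmodq_scale_int (mulq_nden_int q) aMd.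
Qed.

Lemma acharD q r : achar a (q + r) = achar a q + achar a r %[modq 1].
Proof.
set N := (nden q * nden r)%N.
have N0 : (0 < N)%N by rewrite muln_gt0 !nden_gt0.
have qNZ : q * N%:R \is a Num.int.
  by rewrite natrM mulrA rpredM ?mulq_nden_int ?intr_nat ?natr_nat.
have rNZ : r * N%:R \is a Num.int.
  by rewrite natrM mulrCA rpredM ?mulq_nden_int ?intr_nat ?natr_nat.
apply: eqmodq_trans (eqmodq_sym (achar_eqmodq N0 _)) _; first by rewrite mulrDl rpredD.
by rewrite mulrDl; apply: eqmodqD; apply: achar_eqmodq.
Qed.

Lemma acharMz q (k : int) : achar a (k%:~R * q) = k%:~R * achar a q %[modq 1].
Proof.
apply: eqmodq_sym; rewrite {1}/achar mulrA; apply: achar_eqmodq (nden_gt0 q) _.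
by rewrite -mulrA rpredM ?intr_int ?mulq_nden_int.
Qed.

Lemma acharN q : achar a (- q) = - achar a q %[modq 1].
Proof. by have := acharMz q (-1); rewrite !mulN1r. Qed.

Lemma acharB q r : achar a (q - r) = achar a q - achar a r %[modq 1].
Proof. exact: eqmodq_trans (acharD q (- r)) (eqmodqD (eqmodq_refl _ _) (acharN r)). Qed.

Lemma achar0 : achar a 0 = 0.
Proof. by rewrite /achar mul0r. Qed.

Lemma afmulq_achar x n : (0 < n)%N ->
  afmulq a x n.-1 = n%:R * achar a (x / n%:R) %[modq n%:R].
Proof.
case: n => // n _; set m := n.+1; have nz : m%:R != 0 :> rat by rewrite pnatr_eq0.
have N0 : (0 < m * nden x)%N by rewrite muln_gt0 nden_gt0.
have xE : x = m%:R * (x / m%:R) by rewrite mulrC divfK.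
rewrite -[afmulq a x _]/(rmod (x * acomp a (m * nden x)) m).
apply: eqmodq_trans (rmod_eqmodq _ _) _.
rewrite {1}xE -mulrA -[X in _ = _ %[modq X]]mulr1.
apply: eqmodq_scale; apply: achar_eqmodq N0 _.
by rewrite natrM mulrA divfK ?mulq_nden_int.
Qed.

Lemma acomp_achar n : (0 < n)%N -> acomp a n = n%:R * achar a n%:R^-1 %[modq n%:R].
Proof.
move=> n0; have nz : n%:R != 0 :> rat by rewrite pnatr_eq0 -lt0n.
have -> : acomp a n = n%:R * (n%:R^-1 * acomp a n) by rewrite mulrA divff ?mul1r.
rewrite -[X in _ = _ %[modq X]]mulr1; apply: eqmodq_scale; apply: achar_eqmodq n0 _.
by rewrite mulVf ?int_num1.
Qed.

Lemma achar_int_eqmodq y y' :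
  achar a (y - y') \is a Num.int -> achar a y = achar a y' %[modq 1].
Proof. by move=> aZ; apply/eqmodq1E; apply: eqmodq1_int (eqmodq_sym (acharB y y')) aZ. Qed.

End AdeleCharacter.

Lemma Af_achar_ext a b : (forall q, achar a q = achar b q %[modq 1]) -> a = b.
Proof.
move=> ab; apply: Af_ext => n n0.
apply: eqmodq_range_eq (acomp_range a n0) (acomp_range b n0) _.
apply: eqmodq_trans (acomp_achar a n0) _.
apply: eqmodq_trans (eqmodq_sym (acomp_achar b n0)).
by rewrite -[X in _ = _ %[modq X]]mulr1; apply: eqmodq_scale.
Qed.

Lemma rat_intM_divn (x q : rat) : 0 < x ->
  exists k : int, exists2 n : nat, (0 < n)%N & q = k%:~R * (x / n%:R).
Proof.
move=> x0; exists (numq q * denq x); exists (nden q * `|numq x|)%N.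
  by rewrite muln_gt0 nden_gt0 absz_gt0 numq_eq0 gt_eqF.
have nxE : (`|numq x|%N)%:R = (numq x)%:~R :> rat by rewrite natr_absz gtr0_norm ?numq_gt0.
have dxE : (denq x)%:~R = (nden x)%:R :> rat by rewrite /nden natr_absz gtr0_norm ?denq_gt0.
have nqz : (nden q)%:R != 0 :> rat by rewrite pnatr_eq0 -lt0n nden_gt0.
have ndz : (nden x)%:R != 0 :> rat by rewrite pnatr_eq0 -lt0n nden_gt0.
rewrite natrM nxE intrM dxE -!mulq_nden; field.
by rewrite nqz ndz gt_eqF.
Qed.

Lemma achar_eq_of_afmulq a b x n : (0 < n)%N -> afmulq a x = afmulq b x ->
  achar a (x / n%:R) = achar b (x / n%:R) %[modq 1].
Proof.
move=> n0 ab; have nz : n%:R != 0 :> rat by rewrite pnatr_eq0 -lt0n.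
have := afmulq_achar b x n0; rewrite -ab => /(eqmodq_trans (eqmodq_sym (afmulq_achar a x n0))).
by rewrite -[X in _ = _ %[modq X]]mulr1 => /(eqmodq_scaleE _ _ _ nz).
Qed.

Lemma afmulq_inj a b x : 0 < x -> afmulq a x = afmulq b x -> a = b.
Proof.
move=> x0 ab; apply: Af_achar_ext => q; have [k [n n0 ->]] := rat_intM_divn q x0.
apply: eqmodq_trans (acharMz _ _ _) (eqmodq_trans _ (eqmodq_sym (acharMz _ _ _))).
exact/eqmodqMz/achar_eq_of_afmulq.
Qed.

(** * Homomorphisms from subgroups of Q to Zhat *)

Section Subgroup.
Variable L : rat -> Prop.
Hypothesis L_subgroup : is_subgroup L.

Lemma subgroup0 : L 0.
Proof. by case: L_subgroup. Qed.

Lemma subgroupB x y : L x -> L y -> L (x - y).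
Proof. by case: L_subgroup => _; apply. Qed.

Lemma subgroupN x : L x -> L (- x).
Proof. by move=> Lx; rewrite -sub0r; apply: subgroupB subgroup0 Lx. Qed.

Lemma subgroupD x y : L x -> L y -> L (x + y).
Proof. by move=> Lx Ly; rewrite -[y]opprK; apply: subgroupB Lx (subgroupN Ly). Qed.

Lemma subgroupMn x k : L x -> L (k%:R * x).
Proof.
move=> Lx; elim: k => [|k IHk]; first by rewrite mul0r; apply: subgroup0.
by rewrite -addn1 natrD mulrDl mul1r; apply: subgroupD.
Qed.

Lemma subgroupMz x (k : int) : L x -> L (k%:~R * x).
Proof.
move=> Lx; case: k => k; first exact: subgroupMn.
by rewrite NegzE intrN mulNr; apply/subgroupN/subgroupMn.
Qed.

Lemma subgroup_pos : (exists x, L x /\ x != 0) -> exists x, L x /\ 0 < x.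
Proof.
case=> x [Lx x0]; case: (ltrgtP x 0) => [xlt0|xgt0|xE]; last by rewrite xE eqxx in x0.
- by exists (- x); rewrite oppr_gt0; split=> //; apply: subgroupN.
- by exists x.
Qed.

Lemma subgroup_nat_multiple x q : L x -> 0 < x -> exists2 k, (0 < k)%N & L (k%:R * q).
Proof.
move=> Lx x0; exists (nden q * `|numq x|)%N.
  by rewrite muln_gt0 nden_gt0 absz_gt0 numq_eq0 gt_eqF.
have -> : (nden q * `|numq x|)%:R * q = (numq q * (nden x)%:Z)%:~R * x.
  have nxE : (`|numq x|%N)%:R = (numq x)%:~R :> rat.
    by rewrite natr_absz gtr0_norm ?numq_gt0.
  rewrite natrM nxE intrM -[(Posz _)%:~R]/((nden x)%:R).
  by rewrite -(mulq_nden x) -(mulq_nden q); ring.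
exact: subgroupMz.
Qed.

End Subgroup.

Section Homomorphism.
Variables (L : rat -> Prop) (xi : rat -> Zhat).
Hypotheses (L_subgroup : is_subgroup L) (xi_hom : is_hom L xi).
Variable n : nat.
Hypothesis n_gt0 : (0 < n)%N.

Let xin x : rat := (zcomp (xi x) n)%:~R.

Lemma hom_zcompD x y : L x -> L y -> xin (x + y) = xin x + xin y %[modq n%:R].
Proof.
move=> Lx Ly; case: n n_gt0 @xin => // k _ /=.
by rewrite /zcomp /= (xi_hom Lx Ly) /zadd -intrD; apply: modz_eqmodq.
Qed.

Lemma hom_zcomp0 : xin 0 = 0 %[modq n%:R].
Proof.
have := hom_zcompD (subgroup0 L_subgroup) (subgroup0 L_subgroup).
rewrite addr0 => h; have := eqmodqB h (eqmodq_refl n%:R (xin 0)).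
by rewrite subrr addrK => /eqmodq_sym.
Qed.

Lemma hom_zcompN x : L x -> xin (- x) = - xin x %[modq n%:R].
Proof.
move=> Lx; have := hom_zcompD (subgroupN L_subgroup Lx) Lx; rewrite addNr => h.
have := eqmodqB (eqmodq_trans (eqmodq_sym h) hom_zcomp0) (eqmodq_refl n%:R (xin x)).
by rewrite addrK sub0r.
Qed.

Lemma hom_zcompMn x k : L x -> xin (k%:R * x) = k%:R * xin x %[modq n%:R].
Proof.
move=> Lx; elim: k => [|k IHk]; first by rewrite !mul0r; apply: hom_zcomp0.
rewrite -addn1 natrD !mulrDl !mul1r.
apply: eqmodq_trans (hom_zcompD (subgroupMn L_subgroup k Lx) Lx) _.
exact: eqmodqD IHk (eqmodq_refl _ _).
Qed.

Lemma hom_zcompMz x (k : int) : L x -> xin (k%:~R * x) = k%:~R * xin x %[modq n%:R].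
Proof.
move=> Lx; case: k => k; first exact: hom_zcompMn.
rewrite NegzE intrN !mulNr.
apply: eqmodq_trans (hom_zcompN (subgroupMn L_subgroup k.+1 Lx)) _.
exact: eqmodqN (hom_zcompMn k.+1 Lx).
Qed.

End Homomorphism.

Section HomAdele.
Variables (L : rat -> Prop) (xi : rat -> Zhat).
Hypotheses (L_subgroup : is_subgroup L) (xi_hom : is_hom L xi).
Variable x0 : rat.
Hypotheses (L_x0 : L x0) (x0_gt0 : 0 < x0).

Let u0 : nat := `|numq x0|%N.

Let u0_gt0 : (0 < u0)%N.
Proof. by rewrite absz_gt0 numq_eq0 gt_eqF. Qed.

Let u0E : u0%:R = x0 * (nden x0)%:R.
Proof. by rewrite mulq_nden natr_absz gtr0_norm ?numq_gt0. Qed.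

(* The components of xi(x0) / x0: modulo n, only xi(x0) modulo n * numq x0 matters. *)
Definition hom_adele_seq (n : nat) : rat := x0^-1 * (zcomp (xi x0) (n * u0))%:~R.

Lemma hom_adele_seq_compatible : modq_compatible hom_adele_seq.
Proof.
move=> m n n0 mn; have nu0 : (0 < n * u0)%N by rewrite muln_gt0 n0 u0_gt0.
have := eqmodq_scale x0^-1 (zcomp_compatible (xi x0) nu0 (dvdn_mul mn (dvdnn u0))).
rewrite natrM u0E mulrCA mulKf ?gt_eqF // mulrC => h.
exact: (@eqmodq_mulmod _ _ _ (nden x0)).
Qed.

Definition hom_adele : Af := mkAf hom_adele_seq_compatible.

Lemma hom_zcomp_ratio x n : L x -> (0 < n)%N ->
  (zcomp (xi x) (n * nden x * u0))%:~R
    = x / x0 * (zcomp (xi x0) (n * nden x * u0))%:~R %[modq n%:R].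
Proof.
move=> Lx n0; set N := (n * nden x * u0)%N; set k := (nden x * u0)%N.
have N0 : (0 < N)%N by rewrite !muln_gt0 n0 nden_gt0.
have kz : k%:R != 0 :> rat by rewrite pnatr_eq0 -lt0n muln_gt0 nden_gt0.
have kxE : k%:R * x = (numq x * nden x0)%:~R * x0.
  rewrite natrM u0E intrM -[(Posz _)%:~R]/((nden x0)%:R) -mulq_nden; ring.
have := hom_zcompMn L_subgroup xi_hom N0 k Lx; rewrite kxE => hx.
have hx0 := hom_zcompMz L_subgroup xi_hom N0 (numq x * nden x0) L_x0.
apply/(eqmodq_scaleE _ _ _ kz).
have -> : k%:R * (x / x0 * (zcomp (xi x0) N)%:~R)
          = (numq x * nden x0)%:~R * (zcomp (xi x0) N)%:~R.
  by rewrite mulrA mulrA kxE mulfK ?gt_eqF.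
have -> : k%:R * n%:R = N%:R :> rat by rewrite /N -mulnA mulnC natrM.
exact: eqmodq_trans (eqmodq_sym hx) hx0.
Qed.

Lemma afmulq_hom_adele x : L x -> afmulq hom_adele x = zhat_to_af (xi x).
Proof.
move=> Lx; apply: functional_extensionality => k; set n := k.+1.
have nv0 : (0 < n * nden x)%N by rewrite muln_gt0 nden_gt0.
rewrite /zhat_to_af -[zval _ k]/(zcomp (xi x) n).
rewrite -[afmulq _ _ k]/(rmod (x * acomp hom_adele (n * nden x)) n).
apply: rmod_uniq (ltn0Sn k) (zcomp_range _ (ltn0Sn k)) _.
have reduce : x * acomp hom_adele (n * nden x) = x * hom_adele_seq (n * nden x) %[modq n%:R].
  have := eqmodq_scale x (acomp_mkAf hom_adele_seq_compatible nv0).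
  by rewrite natrM mulrCA mulq_nden mulrC => /eqmodq_mulmod.
apply: eqmodq_trans reduce _; rewrite /hom_adele_seq mulrA.
apply: eqmodq_trans (eqmodq_sym (hom_zcomp_ratio Lx (ltn0Sn k))) _.
by apply: zcomp_compatible; rewrite ?muln_gt0 ?nden_gt0 // -mulnA dvdn_mulr.
Qed.

End HomAdele.

Lemma exists_hom_adele L xi : is_subgroup L -> (exists x, L x /\ x != 0) -> is_hom L xi ->
  exists a, forall x, L x -> afmulq a x = zhat_to_af (xi x).
Proof.
move=> L_subgroup L_nontriv xi_hom.
have [x0 [L_x0 x0_gt0]] := subgroup_pos L_subgroup L_nontriv.
by exists (hom_adele xi x0_gt0) => x; apply: afmulq_hom_adele.
Qed.

Lemma in_Zhat_int_acomp (b : Af) :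
  (forall n, (0 < n)%N -> acomp b n \is a Num.int) -> in_Zhat (aval b).
Proof.
move=> bZ; pose g n := Num.floor (acomp b n).
have gE n : (0 < n)%N -> (g n)%:~R = acomp b n by move=> n0; rewrite /g floorK ?bZ.
have g_compat : modq_compatible (fun n => (g n)%:~R).
  by move=> m n n0 mn; rewrite !gE ?(dvdn_gt0 n0 mn) //; apply: acomp_compatible.
exists (mkZhat g_compat); apply: functional_extensionality => k.
rewrite /zhat_to_af /= -rmod_int // gE //.
by rewrite /acomp /= -(aval_compat b (dvdnn k.+1)).
Qed.

Lemma afmulq_compat a r k l : (k.+1 %| l.+1)%N -> afmulq a r k = rmod (afmulq a r l) k.+1.
Proof.
move=> kl; rewrite -[afmulq a r k]/(rmod (r * acomp a (k.+1 * nden r)) k.+1).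
apply: eqmodq_rmod => //.
apply: eqmodq_trans (eqmodq_dvdn kl (eqmodq_sym (rmod_eqmodq _ _))).
have lr0 : (0 < l.+1 * nden r)%N by rewrite muln_gt0 nden_gt0.
have := eqmodq_scale r (acomp_compatible a lr0 (dvdn_mul kl (dvdnn (nden r)))).
rewrite natrM mulrCA mulq_nden mulrC => /eqmodq_mulmod.
exact: eqmodq_sym.
Qed.

Definition afscale (a : Af) (r : rat) : Af := MkAf (afmulq_compat a r).

Lemma achar_afscale a r y : achar (afscale a r) y = achar a (r * y) %[modq 1].
Proof.
have dz : (nden y)%:R != 0 :> rat by rewrite pnatr_eq0 -lt0n nden_gt0.
have := eqmodq_scale_int (mulq_nden_int y) (afmulq_achar a r (nden_gt0 y)).
rewrite mulrA mulq_nden => /eqmodq_trans; apply.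
apply: eqmodq_trans (eqmodq_sym (acharMz _ _ _)) _.
have -> : (numq y)%:~R * (r / (nden y)%:R) = r * y by rewrite -mulq_nden; field.
exact: eqmodq_refl.
Qed.

Definition af_of_zhat (z : Zhat) : Af := mkAf (zcomp_compatible z).

Lemma achar_af_of_zhat z q : achar (af_of_zhat z) q = q * (zcomp z (nden q))%:~R %[modq 1].
Proof.
exact: eqmodq_scale_int (mulq_nden_int q) (acomp_mkAf (zcomp_compatible z) (nden_gt0 q)).
Qed.

Lemma in_Zhat_afmulq a q : in_Zhat (afmulq a q) <-> achar a q \is a Num.int.
Proof.
split=> [[z zE]|aqZ].
  have := afmulq_achar a q (ltn0Sn 0); rewrite /= zE /zhat_to_af.
  rewrite -[1%:R]/(1 : rat) mul1r divr1 => h.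
  exact: eqmodq1_int (eqmodq_sym h) (intr_int _ _).
apply: (@in_Zhat_int_acomp (afscale a q)) => n n0.
have nz : n%:R != 0 :> rat by rewrite pnatr_eq0 -lt0n.
have e := acharMz a (q / n%:R) n.
rewrite -[(Posz n)%:~R]/(n%:R : rat) mulrC divfK // in e.
apply: eqmodq1_int (eqmodq_int_mod (afmulq_achar a q n0) (natr_int _ n)) _.
exact: eqmodq1_int (eqmodq_sym e) aqZ.
Qed.

Lemma zcomp_achar a x z n : afmulq a x = zhat_to_af z -> (0 < n)%N ->
  (zcomp z n)%:~R = n%:R * achar a (x / n%:R) %[modq n%:R].
Proof. by move=> xz n0; rewrite -[_%:~R]/(zhat_to_af z n.-1) -xz; apply: afmulq_achar. Qed.

Lemma is_hom_afmulq L b eta : is_subgroup L ->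
  (forall x, L x -> afmulq b x = zhat_to_af (eta x)) -> is_hom L eta.
Proof.
move=> L_subgroup eta_b x1 x2 L1 L2; apply: functional_extensionality => k.
rewrite /zadd -![zval _ k]/(zcomp _ k.+1).
apply: esym; apply: modz_uniq (ltn0Sn k) (zcomp_range _ (ltn0Sn k)) _.
rewrite intrD; apply: eqmodq_trans (eqmodqD (zcomp_achar (eta_b _ L1) (ltn0Sn k))
  (zcomp_achar (eta_b _ L2) (ltn0Sn k))) _.
have L12 := subgroupD L_subgroup L1 L2.
apply: eqmodq_sym; apply: eqmodq_trans (zcomp_achar (eta_b _ L12) (ltn0Sn k)) _.
by rewrite mulrDl -mulrDr -[X in _ = _ %[modq X]]mulr1; apply: eqmodq_scale (acharD _ _ _).
Qed.

Lemma exists_hom_of_achar_int L b : is_subgroup L ->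
  (forall x, L x -> achar b x \is a Num.int) ->
  exists2 eta, is_hom L eta & forall x, L x -> afmulq b x = zhat_to_af (eta x).
Proof.
move=> L_subgroup b_int.
have [eta eta_b] : exists eta : rat -> Zhat, forall x, L x -> afmulq b x = zhat_to_af (eta x).
  have pick x : exists z : Zhat, L x -> afmulq b x = zhat_to_af z.
    case: (classic (L x)) => [/b_int/in_Zhat_afmulq[z xz]|nLx]; first by exists z.
    have [z _] : in_Zhat (afmulq b 0) by apply/in_Zhat_afmulq; rewrite achar0 int_num0.
    by exists z => /nLx.
  exists (fun x => proj1_sig (constructive_indefinite_description _ (pick x))).
  by move=> x; apply: (proj2_sig (constructive_indefinite_description _ (pick x))).
by exists eta => //; apply: is_hom_afmulq eta_b.
Qed.

(** * Generators of Hom(L, Zhat) from kernels *)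

Section Multiplier.
Variables (L : rat -> Prop) (a b : Af).
Hypotheses (L_subgroup : is_subgroup L)
  (L_kernel : forall q, L q <-> achar a q \is a Num.int)
  (b_int : forall y, L y -> achar b y \is a Num.int).

(* [s] acts as b / a on M^-1 L; the c with b = c a on L is assembled from such multipliers. *)
Definition multiplier (M : nat) (s : int) : Prop :=
  forall y, L (M%:R * y) -> achar b y = s%:~R * achar a y %[modq 1].

Lemma multiplier1 : multiplier 1 0.
Proof. by move=> y; rewrite mul1r mul0r => Ly; apply/eqmodq1E; rewrite subr0 b_int. Qed.

Lemma multiplier_dvdn N M s : (N %| M)%N -> multiplier M s -> multiplier N s.
Proof.
move=> /dvdnP[k ->] sM y LNy; apply: sM.
by rewrite natrM -mulrA; apply: subgroupMn.
Qed.

Lemma achar_kernel_mul M y : L (M%:R * y) -> achar a y * M%:R \is a Num.int.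
Proof.
move=> /L_kernel aZ; rewrite mulrC.
exact: eqmodq1_int (eqmodq_sym (acharMz a y M)) aZ.
Qed.

Lemma multiplier_eqmod M s s' :
  multiplier M s -> s'%:~R = s%:~R %[modq M%:R] -> multiplier M s'.
Proof.
move=> sM s's y LMy; apply: eqmodq_trans (sM y LMy) _.
have := eqmodq_scale_int (achar_kernel_mul LMy) (eqmodq_sym s's).
by rewrite ![achar a y * _]mulrC.
Qed.

Lemma kernel_generator_int D y1 : (0 < D)%N -> achar a y1 = D%:R^-1 %[modq 1] ->
  D%:R * achar b y1 \is a Num.int.
Proof.
move=> D0 ay1; have Dz : D%:R != 0 :> rat by rewrite pnatr_eq0 -lt0n.
have LDy1 : L (D%:R * y1).
  apply/L_kernel; apply: eqmodq1_int (acharMz a y1 D) _.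
  by apply: eqmodq1_int (eqmodqMz D ay1) _; rewrite -[(Posz D)%:~R]/(D%:R : rat) divff.
exact: eqmodq1_int (eqmodq_sym (acharMz b y1 D)) (b_int LDy1).
Qed.

Lemma multiplier_gcd N D y1 (j s : int) : (0 < D)%N ->
  achar a y1 = D%:R^-1 %[modq 1] -> achar b y1 = j%:~R / D%:R %[modq 1] ->
  multiplier N s -> ((gcdn D N)%:Z %| j - s)%Z.
Proof.
move=> D0 ay1 by1 sN; set e := gcdn D N.
have e0 : (0 < e)%N by rewrite gcdn_gt0 D0.
have ez : e%:R != 0 :> rat by rewrite pnatr_eq0 -lt0n.
have [D' DE] : exists D', D = (D' * e)%N by exists (D %/ e)%N; rewrite divnK ?dvdn_gcdl.
have [N' NE] : exists N', N = (N' * e)%N by exists (N %/ e)%N; rewrite divnK ?dvdn_gcdr.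
have D'z : D'%:R != 0 :> rat.
  by rewrite pnatr_eq0 -lt0n; move: D0; rewrite DE muln_gt0 => /andP[].
have D'D : D'%:R / D%:R = e%:R^-1 :> rat by rewrite DE natrM invfM mulrA divff ?mul1r.
set y := D'%:R * y1.
have ay : achar a y = e%:R^-1 %[modq 1].
  by apply: eqmodq_trans (acharMz a y1 D') _; rewrite -D'D; apply: eqmodqMz.
have LNy : L (N%:R * y).
  apply/L_kernel; apply: eqmodq1_int (acharMz a y N) _.
  by apply: eqmodq1_int (eqmodqMz N ay) _; rewrite -[(Posz N)%:~R]/(N%:R : rat) NE natrM mulfK.
have b_y : achar b y = j%:~R / e%:R %[modq 1].
  apply: eqmodq_trans (acharMz b y1 D') _; rewrite -D'D.
  by apply: eqmodq_trans (eqmodqMz D' by1) _; rewrite mulrCA; apply: eqmodq_refl.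
have := eqmodq_trans (eqmodq_sym b_y) (eqmodq_trans (sN y LNy) (eqmodqMz s ay)).
have cancel_e (q : rat) : e%:R * (q * e%:R^-1) = q by rewrite mulrCA mulfV ?mulr1.
by move/(eqmodq_scale e%:R); rewrite mulr1 !cancel_e => /eqmodq_intE.
Qed.

Section Lift.
Variable M : nat.
Hypothesis M_gt0 : (0 < M)%N.

(* As L is the kernel of achar a, the latter embeds M^-1 L / L into (1/M) Z / Z. *)
Lemma kernel_cyclic : exists D : nat, exists y1,
  [/\ (0 < D)%N, achar a y1 = D%:R^-1 %[modq 1]
    & forall y, L (M%:R * y) -> exists i : int, L (y - i%:~R * y1)].
Proof.
have Mz : M%:R != 0 :> rat by rewrite pnatr_eq0 -lt0n.
pose T (t : int) := exists y, L (M%:R * y) /\ achar a y = t%:~R / M%:R %[modq 1].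
have Tsub t1 t2 (i : int) : T t1 -> T t2 -> T (t1 - i * t2).
  move=> [y1 [L1 a1]] [y2 [L2 a2]]; exists (y1 - i%:~R * y2); split.
    by rewrite mulrBr mulrCA; apply: subgroupB L1 (subgroupMz _ _ L2).
  apply: eqmodq_trans (acharB _ _ _) _; rewrite intrB intrM mulrBl -mulrA.
  exact: eqmodqB a1 (eqmodq_trans (acharMz _ _ _) (eqmodqMz _ a2)).
have TM : T M.
  exists 0; split; first by rewrite mulr0; apply: subgroup0.
  rewrite achar0 -[(Posz M)%:~R]/(M%:R : rat) divff //.
  by apply/eqmodq1E; rewrite sub0r rpredN.
have [g [g0 [y1 [_ ay1]] g_dvd]] := int_subgroup_generator M_gt0 TM Tsub.
have gM : (g %| M)%N := g_dvd _ TM.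
have gz : g%:R != 0 :> rat by rewrite pnatr_eq0 -lt0n.
have gMD : g%:R / M%:R = (M %/ g)%:R^-1 :> rat.
  by rewrite -{1}(divnK gM) natrM invfM mulrCA divff ?mulr1.
rewrite -[(Posz g)%:~R]/(g%:R : rat) gMD in ay1.
exists (M %/ g)%N, y1; split=> //; first by rewrite divn_gt0 // dvdn_leq.
move=> y LMy; have /intrP[t tE] := achar_kernel_mul LMy.
have ayE : achar a y = t%:~R / M%:R by rewrite -tE mulfK.
have /dvdzP[i tiE] : (g%:Z %| t)%Z.
  by apply: g_dvd; exists y; split=> //; rewrite -ayE; apply: eqmodq_refl.
exists i; apply/L_kernel; apply: eqmodq1_int (acharB _ _ _) _.
apply/eqmodq1E; apply: eqmodq_sym; apply: eqmodq_trans (acharMz _ _ _) _.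
rewrite ayE tiE intrM -mulrA -[(Posz g)%:~R]/(g%:R : rat) gMD.
exact: eqmodqMz i ay1.
Qed.

Lemma multiplier_of_generator D y1 (j s : int) : (0 < D)%N ->
  achar a y1 = D%:R^-1 %[modq 1] -> achar b y1 = j%:~R / D%:R %[modq 1] ->
  (forall y, L (M%:R * y) -> exists i : int, L (y - i%:~R * y1)) ->
  s%:~R = j%:~R %[modq D%:R] -> multiplier M s.
Proof.
move=> D0 ay1 by1 gen sj y /gen[i Liy].
have Dz : D%:R != 0 :> rat by rewrite pnatr_eq0 -lt0n.
have b_y : achar b y = i%:~R * (j%:~R / D%:R) %[modq 1].
  apply: eqmodq_trans (achar_int_eqmodq (b_int Liy)) _.
  exact: eqmodq_trans (acharMz _ _ _) (eqmodqMz i by1).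
have a_y : achar a y = i%:~R / D%:R %[modq 1].
  apply: eqmodq_trans (achar_int_eqmodq ((L_kernel _).1 Liy)) _.
  exact: eqmodq_trans (acharMz _ _ _) (eqmodqMz i ay1).
have iDZ : (i%:~R / D%:R * D%:R : rat) \is a Num.int by rewrite divfK ?intr_int.
have sij := eqmodq_scale_int iDZ sj; rewrite ![i%:~R / D%:R * _]mulrC in sij.
apply: eqmodq_trans b_y (eqmodq_sym (eqmodq_trans (eqmodqMz s a_y) _)).
by apply: eqmodq_trans sij _; rewrite mulrCA; apply: eqmodq_refl.
Qed.

Lemma multiplier_lift N s : multiplier N s ->
  exists s', multiplier M s' /\ s'%:~R = s%:~R %[modq N%:R].
Proof.
move=> sN; have [D [y1 [D0 ay1 gen]]] := kernel_cyclic.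
have Dz : D%:R != 0 :> rat by rewrite pnatr_eq0 -lt0n.
have /intrP[j jE] := kernel_generator_int D0 ay1.
have by1 : achar b y1 = j%:~R / D%:R %[modq 1].
  by rewrite -jE mulrC mulKf //; apply: eqmodq_refl.
have [s' [Ds' Ns']] := chinese_gcd (multiplier_gcd D0 ay1 by1 sN).
exists s'; split; last exact/eqmodq_intE.
by apply: multiplier_of_generator D0 ay1 by1 gen _; apply/eqmodq_intE.
Qed.

End Lift.

Lemma exists_zhat_multiplier :
  exists c : Zhat, forall n, (0 < n)%N -> multiplier n (zcomp c n).
Proof.
have [c cP] := zhat_of_factorial_chain (P := fun j s => multiplier (j`!) s) multiplier1
  (fun j s sj => multiplier_lift (fact_gt0 j.+1) sj).
exists c => n n0; have [s [sP cs]] := cP n n0.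
by apply: multiplier_eqmod _ cs; apply: multiplier_dvdn sP; rewrite dvdn_fact ?n0 ?leqnn.
Qed.

End Multiplier.

Lemma generates_Hom_of_kernel L xi a : is_subgroup L -> (exists x, L x /\ x != 0) ->
  (forall x, L x -> afmulq a x = zhat_to_af (xi x)) ->
  (forall q, L q <-> achar a q \is a Num.int) -> generates_Hom L xi.
Proof.
move=> L_subgroup L_nontriv xi_a L_kernel eta eta_hom.
have [b eta_b] := exists_hom_adele L_subgroup L_nontriv eta_hom.
have b_int y : L y -> achar b y \is a Num.int.
  by move=> Ly; apply/in_Zhat_afmulq; exists (eta y); apply: eta_b.
have [c cP] := exists_zhat_multiplier L_subgroup L_kernel b_int.
exists c => x Lx; apply: functional_extensionality => k; set n := k.+1.
rewrite -[zval _ k]/(zcomp (eta x) n) /zmul -[zval c k]/(zcomp c n).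
rewrite -[zval (xi x) k]/(zcomp (xi x) n).
apply: esym; apply: modz_uniq (ltn0Sn k) (zcomp_range _ (ltn0Sn k)) _.
have Lnx : L (n%:R * (x / n%:R)) by rewrite mulrC divfK ?pnatr_eq0.
have := eqmodq_scale n%:R (cP n (ltn0Sn k) _ Lnx); rewrite mulr1 => hb.
rewrite intrM; apply: eqmodq_trans (eqmodqMz _ (zcomp_achar (xi_a x Lx) (ltn0Sn k))) _.
rewrite mulrCA; apply: eqmodq_trans (eqmodq_sym hb) _.
exact: eqmodq_sym (zcomp_achar (eta_b x Lx) (ltn0Sn k)).
Qed.

(** * Kernels from generators of Hom(L, Zhat) *)

Definition pidem_seq (p n : nat) : int := chinese (n`_p) (n`_p^') 1 0.

Lemma pidem_compatible p : modq_compatible (fun n => (pidem_seq p n)%:~R).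
Proof.
move=> m n n0 mn; have m0 := dvdn_gt0 n0 mn; apply: eqmodq_modn.
set X := chinese _ _ 1 0; set Y := chinese _ _ 1 0.
rewrite -[in X in _ = _ %[mod X]](partnC p m0).
apply/eqP; rewrite chinese_remainder ?coprime_partC //; apply/andP; split; apply/eqP.
- rewrite -(modn_dvdm X (partn_dvd p n0 mn)) /X (chinese_modl (coprime_partC p n n)).
  by rewrite modn_dvdm ?partn_dvd // /Y (chinese_modl (coprime_partC p m m)).
- rewrite -(modn_dvdm X (partn_dvd p^' n0 mn)) /X (chinese_modr (coprime_partC p n n)).
  by rewrite modn_dvdm ?partn_dvd // /Y (chinese_modr (coprime_partC p m m)).
Qed.

(* The idempotent of Zhat that is 1 in Z_p and 0 in Z_l for every prime l != p. *)
Definition zhat_pidem (p : nat) : Zhat := mkZhat (pidem_compatible p).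

Lemma zhat_pidem_coprime p s : prime p -> (0 < s)%N -> ~~ (p %| s)%N ->
  (zcomp (zhat_pidem p) s)%:~R = 0 %[modq s%:R].
Proof.
move=> p_pr s0 ps; apply: eqmodq_trans (zcomp_mkZhat _ s0) _.
have sE : (s`_p^')%N = s by apply: part_pnat_id; rewrite p'natE.
have := chinese_modr (coprime_partC p s s) 1 0; rewrite [in X in _ = _ %[mod X]]sE.
exact: eqmodq_modn.
Qed.

Lemma zhat_pidem_p p : prime p -> (zcomp (zhat_pidem p) p)%:~R = 1 %[modq p%:R].
Proof.
move=> p_pr; apply: eqmodq_trans (zcomp_mkZhat _ (prime_gt0 p_pr)) _.
have pE : (p`_p)%N = p by apply: part_pnat_id; apply: pnat_id.
have := chinese_modl (coprime_partC p p p) 1 0; rewrite [in X in _ = _ %[mod X]]pE.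
exact: eqmodq_modn.
Qed.

Section PrimeStep.
Variables (L : rat -> Prop) (p : nat) (y : rat).
Hypotheses (L_subgroup : is_subgroup L) (p_prime : prime p).
Hypotheses (L_py : L (p%:R * y)) (L_y : ~ L y).

Let p_neq0 : p%:R != 0 :> rat.
Proof. by rewrite pnatr_eq0 -lt0n prime_gt0. Qed.

Let y_neq0 : y != 0.
Proof. by apply: contra_notN L_y => /eqP ->; apply: subgroup0. Qed.

(* If p divided that denominator, Bezout would write y as a Z-combination of p y and
   a multiple of x. *)
Lemma subgroup_den_coprime x : L x -> ~~ (p %| nden ((p%:R * y)^-1 * x))%N.
Proof.
move=> Lx; apply/negP => p_den; apply: L_y; set z := (p%:R * y)^-1 * x.
have [t tE] := dvdnP p_den.
have cop : coprime `|numq z| p by apply: coprime_dvdr p_den (coprime_num_den z).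
have [u [v uv]] := Bezoutz (numq z) p%:Z.
have gcd1 : gcdz (numq z) p%:Z = 1 by apply/eqP.
have zyE : (numq z)%:~R * y = t%:R * x.
  by rewrite -mulq_nden tE natrM /z; field; rewrite p_neq0 y_neq0.
have -> : y = u%:~R * ((numq z)%:~R * y) + v%:~R * (p%:R * y).
  by rewrite -[p%:R]/((p%:Z)%:~R : rat) !mulrA -!intrM -mulrDl -intrD uv gcd1 mul1r.
apply: (subgroupD L_subgroup); apply: (subgroupMz L_subgroup) => //.
by rewrite zyE; apply: subgroupMn.
Qed.

Let b : Af := afscale (af_of_zhat (zhat_pidem p)) (p%:R * y)^-1.

Lemma achar_pidem_int x : L x -> achar b x \is a Num.int.
Proof.
move=> Lx; apply: eqmodq1_int (achar_afscale _ _ _) _.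
apply: eqmodq1_int (achar_af_of_zhat _ _) _.
have := eqmodq_scale_int (mulq_nden_int _)
  (zhat_pidem_coprime p_prime (nden_gt0 _) (subgroup_den_coprime Lx)).
by rewrite mulr0 => /eqmodq1E; rewrite subr0.
Qed.

Lemma achar_pidem_y : achar b y = p%:R^-1 %[modq 1].
Proof.
apply: eqmodq_trans (achar_afscale _ _ _) _; rewrite invfM -mulrA mulVf // mulr1.
apply: eqmodq_trans (eqmodq_sym (achar_eqmodq _ (prime_gt0 p_prime) _)) _.
  by rewrite mulVf ?int_num1.
have := eqmodq_scale p%:R^-1 (eqmodq_trans
  (acomp_mkAf (zcomp_compatible _) (prime_gt0 p_prime)) (zhat_pidem_p p_prime)).
by rewrite mulr1 mulVf.
Qed.

End PrimeStep.

Lemma kernel_prime_step L xi a p y : is_subgroup L ->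
  (forall x, L x -> afmulq a x = zhat_to_af (xi x)) -> generates_Hom L xi ->
  prime p -> L (p%:R * y) -> achar a y \is a Num.int -> L y.
Proof.
move=> L_subgroup xi_a xi_gen p_pr L_py aZ; apply: NNPP => L_y.
have p0 := prime_gt0 p_pr; have pz : p%:R != 0 :> rat by rewrite pnatr_eq0 -lt0n.
have [eta eta_hom eta_b] :=
  exists_hom_of_achar_int L_subgroup (achar_pidem_int L_subgroup p_pr L_py L_y).
have [c eta_c] := xi_gen eta eta_hom.
have wy : p%:R * y / p%:R = y by rewrite mulrC mulKf.
have eta1 : (zcomp (eta (p%:R * y)) p)%:~R = 1 %[modq p%:R].
  apply: eqmodq_trans (zcomp_achar (eta_b _ L_py) p0) _.
  rewrite wy -[X in _ = X %[modq _]](mulfV pz) -[X in _ = _ %[modq X]]mulr1.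
  exact: eqmodq_scale (achar_pidem_y L_subgroup p_pr L_y).
have eta0 : (zcomp (eta (p%:R * y)) p)%:~R = 0 %[modq p%:R].
  rewrite /zcomp (eta_c _ L_py) /zmul prednK //.
  apply: eqmodq_trans (modz_eqmodq _ _) _; rewrite intrM -(mulr0 (zcomp c p)%:~R).
  apply: eqmodqMz; apply: eqmodq_trans (zcomp_achar (xi_a _ L_py) p0) _.
  by rewrite wy; have /intrP[k ->] := aZ; exists k; rewrite subr0 mulrC.
have r1 : (0 : rat) <= 1 < (p%:R : rat) by rewrite ler01 ltr1n prime_gt1.
have r0 : (0 : rat) <= 0 < (p%:R : rat) by rewrite lexx ltr0n.
by have /eqP := eqmodq_range_eq r1 r0 (eqmodq_trans (eqmodq_sym eta1) eta0); rewrite oner_eq0.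
Qed.

Lemma kernel_of_generator L xi a : is_subgroup L -> (exists x, L x /\ x != 0) ->
  (forall x, L x -> afmulq a x = zhat_to_af (xi x)) -> generates_Hom L xi ->
  forall q, L q <-> achar a q \is a Num.int.
Proof.
move=> L_subgroup L_nontriv xi_a xi_gen q; split=> [Lq|].
  by apply/in_Zhat_afmulq; exists (xi q); apply: xi_a.
have [x0 [Lx0 x0_gt0]] := subgroup_pos L_subgroup L_nontriv.
have [k k0 Lkq] := subgroup_nat_multiple L_subgroup q Lx0 x0_gt0.
elim/ltn_ind: k k0 q Lkq => k IHk k0 q Lkq aqZ.
have [k_le1|k_gt1] := leqP k 1.
  have k1 : k = 1%N by apply/anti_leq; rewrite k_le1.
  by move: Lkq; rewrite k1 mul1r.
have [k' kE] := dvdnP (pdiv_dvd k); have p_pr := pdiv_prime k_gt1.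
have k'0 : (0 < k')%N by move: k0; rewrite kE muln_gt0 => /andP[].
apply: (IHk k' _ k'0 q _ aqZ); first by rewrite kE -{1}(muln1 k') ltn_pmul2l ?prime_gt1.
apply: kernel_prime_step L_subgroup xi_a xi_gen p_pr _ _.
  by rewrite mulrA -natrM mulnC -kE.
exact: eqmodq1_int (acharMz a q k') (rpredM (intr_int _ _) aqZ).
Qed.

Theorem lemma8p3 (L : rat -> Prop) (xi : rat -> Zhat) :
  is_subgroup L -> (exists x, L x /\ x != 0) -> is_hom L xi ->
  exists a : Af,
    ((forall x, L x -> afmulq a x = zhat_to_af (xi x)) /\
     (forall b : Af, (forall x, L x -> afmulq b x = zhat_to_af (xi x)) -> b = a)) /\
    (generates_Hom L xi <-> (forall q : rat, L q <-> in_Zhat (afmulq a q))).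
Proof.
move=> L_subgroup L_nontriv xi_hom.
have [a xi_a] := exists_hom_adele L_subgroup L_nontriv xi_hom.
have [x0 [L_x0 x0_gt0]] := subgroup_pos L_subgroup L_nontriv.
exists a; split.
  by split=> // b xi_b; apply: (afmulq_inj x0_gt0); rewrite xi_a // xi_b.
split=> [xi_gen q | L_kernel].
  by rewrite in_Zhat_afmulq; apply: kernel_of_generator L_subgroup L_nontriv xi_a xi_gen q.
apply: generates_Hom_of_kernel L_subgroup L_nontriv xi_a _ => q.
by rewrite -in_Zhat_afmulq.
Qed.
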